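(* A strongly regular graph with parameters $(76,30,8,14)$ does not contain $K_5$ (complete graph on $5$ vertices) as a subgraph.
   Context: A graph is strongly regular with parameters $(v,k,\lambda,\mu)$ if it has $v$ vertices, is $k$-regular, adjacent vertices have exactly $\lambda$ common neighbours and distinct non-adjacent vertices have exactly $\mu$ common neighbours. *)

From mathcomp Require Import all_boot.
Set Implicit Arguments. Unset Strict Implicit. Unset Printing Implicit Defensive.

Definition simple_graph (T : finType) (e : rel T) : Prop :=
  symmetric e /\ irreflexive e.

Definition srg (T : finType) (e : rel T) (v k lam mu : nat) : Prop :=
  [/\ simple_graph e,
      #|T| = v,
      (forall x : T, #|[set y | e x y]| = k),
      (forall x y : T, e x y -> #|[set z | e x z && e y z]| = lam)
    & (forall x y : T, x != y -> ~~ e x y -> #|[set z | e x z && e y z]| = mu)].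

Definition contains_clique (T : finType) (e : rel T) (n : nat) : Prop :=
  exists f : 'I_n -> T, injective f /\ (forall i j : 'I_n, i != j -> e (f i) (f j)).

(* Let D x be the number of neighbours of x in a clique S of size n. Double
   counting gives sum D = n k and sum D^2 = n k + n (n - 1) lambda. As
   (D - 1)(D - 2) >= 0 for every integer D, and D = n - 1 on S itself,
   3 n k + n (n - 2)(n - 3) <= n k + n (n - 1) lambda + 2 v. For n = 5 and
   (v, k, lambda) = (76, 30, 8) this reads 330 <= 312. *)
From mathcomp Require Import all_boot.
From mathcomp Require Import zify.

Set Implicit Arguments.
Unset Strict Implicit.
Unset Printing Implicit Defensive.

Section CliqueCounting.
Variables (T : finType) (e : rel T).

Definition clique_deg (S : {set T}) (x : T) : nat := #|[set s in S | e s x]|.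

Lemma card_set_sum (A : {pred T}) (P : pred T) :
  #|[set y in A | P y]| = \sum_(y in A) P y.
Proof.
rewrite -sum1_card big_mkcond [RHS]big_mkcond /=; apply: eq_bigr => y _.
by rewrite !inE; case: (y \in A); case: (P y).
Qed.

Lemma sum_clique_deg (S : {set T}) :
  \sum_x clique_deg S x = \sum_(s in S) #|[set y | e s y]|.
Proof.
rewrite /clique_deg; under eq_bigr do rewrite card_set_sum.
rewrite exchange_big /=; apply: eq_bigr => s _.
by rewrite -(card_set_sum predT).
Qed.

Lemma sum_sqr_clique_deg (S : {set T}) :
  \sum_x clique_deg S x ^ 2 =
  \sum_(s in S) \sum_(t in S) #|[set z | e s z && e t z]|.
Proof.
rewrite /clique_deg; under eq_bigr do rewrite card_set_sum -mulnn big_distrlr /=.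
rewrite exchange_big /=; apply: eq_bigr => s _.
rewrite exchange_big /=; apply: eq_bigr => t _.
by under eq_bigr do rewrite mulnb; rewrite -(card_set_sum predT).
Qed.

Variables (k lam : nat) (S : {set T}).
Hypothesis e_irr : irreflexive e.
Hypothesis e_regular : forall x, #|[set y | e x y]| = k.
Hypothesis e_lambda : forall x y, e x y -> #|[set z | e x z && e y z]| = lam.
Hypothesis S_clique : {in S &, forall s t, s != t -> e s t}.

Lemma sum_clique_deg_regular : \sum_x clique_deg S x = #|S| * k.
Proof.
by rewrite sum_clique_deg (eq_bigr _ (fun s _ => e_regular s)) sum_nat_const.
Qed.

Lemma sum_sqr_clique_deg_regular :
  \sum_x clique_deg S x ^ 2 = #|S| * (k + #|S|.-1 * lam).
Proof.
rewrite sum_sqr_clique_deg -sum_nat_const; apply: eq_bigr => s sS.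
rewrite (bigD1 s) //=; congr (_ + _).
  by rewrite -(e_regular s); apply: eq_card => z; rewrite !inE andbb.
rewrite (cardsD1 s S) sS add1n succnK -sum_nat_const.
apply: eq_big => [t | t /andP[tS ts]]; first by rewrite !inE andbC.
by rewrite e_lambda // S_clique // eq_sym.
Qed.

Lemma clique_deg_clique s : s \in S -> clique_deg S s = #|S|.-1.
Proof.
move=> sS; rewrite /clique_deg (cardsD1 s S) sS add1n succnK; apply: eq_card => t.
rewrite !inE; case: (eqVneq t s) => [-> | ts]; first by rewrite e_irr andbF.
by apply/andP/idP => [[] // | tS]; split; last exact: S_clique.
Qed.

Lemma clique_counting_bound :
  3 * (#|S| * k) + #|S| * ((#|S| - 2) * (#|S| - 3))
    <= #|S| * (k + #|S|.-1 * lam) + 2 * #|T|.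
Proof.
have pointwise d : 3 * d + (d - 1) * (d - 2) <= d ^ 2 + 2.
  by case: d => [|[|d]] //; rewrite -mulnn; nia.
have on_clique : #|S| * ((#|S| - 2) * (#|S| - 3))
    <= \sum_x (clique_deg S x - 1) * (clique_deg S x - 2).
  rewrite -sum_nat_const [X in _ <= X](bigID (mem S)) /=.
  apply: (leq_trans _ (leq_addr _ _)).
  by apply/eq_leq/eq_bigr => s sS; rewrite clique_deg_clique // -subn1 -!subnDA.
rewrite -sum_clique_deg_regular -sum_sqr_clique_deg_regular.
have -> : 2 * #|T| = \sum_(x : T) 2 by rewrite sum_nat_const mulnC.
apply: leq_trans (leq_add (leqnn _) on_clique) _.
by rewrite big_distrr -!big_split /=; apply: leq_sum => x _; exact: pointwise.
Qed.

End CliqueCounting.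

Theorem mainTheorem8 (T : finType) (e : rel T) :
  srg e 76 30 8 14 -> ~ contains_clique e 5.
Proof.
case=> [[_ e_irr] card_T e_regular e_lambda _] [f [f_inj f_clique]].
pose S := f @: [set: 'I_5].
have card_S : #|S| = 5 by rewrite card_imset // cardsT card_ord.
have S_clique : {in S &, forall s t, s != t -> e s t}.
  move=> _ _ /imsetP[i _ ->] /imsetP[j _ ->] fij.
  by apply: f_clique; apply: contraNneq fij => ->.
by have := clique_counting_bound e_irr e_regular e_lambda S_clique; rewrite card_S card_T.
Qed.
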